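(* Let $A$ be a real $2\times 2$ matrix and $B$ a real $1\times 2$ matrix, and let $\mathrm{NT}=\{\vec{x}\in\mathbb{R}^2 : BA^k\vec{x}>0 \text{ for all } k\in\mathbb{N}\}$. Then $\mathrm{NT}$ is one of the following: (1) the empty set; (2) a ray from the origin, i.e. a set $\{k\vec{v}: k>0\}$ for some nonzero $\vec{v}\in\mathbb{R}^2$; (3) a sector between two rays starting from the origin, i.e. a convex set with nonempty interior satisfying $k\,\mathrm{NT}\subseteq \mathrm{NT}$ for all $k>0$.
   Context: We consider the homogeneous simple linear loop ''while $(B\vec{x}>0)$ $\{\vec{x}:=A\vec{x}\}$'' with program variables $\vec{x}\in\mathbb{R}^2$. Its non-termination set $\mathrm{NT}$ is the set of inputs on which the loop never terminates, namely $\mathrm{NT}=\{\vec{x}\in\mathbb{R}^2 : BA^k\vec{x}>0 \text{ for all integers } k\ge 0\}$. It is known (and may be used) that $\mathrm{NT}$ is convex. *)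

From Stdlib Require Import Reals.
Open Scope R_scope.

(* Vectors in R^2 as pairs; a 2x2 matrix as its four entries
   A = [[a11 a12];[a21 a22]]; a 1x2 matrix B = [b1 b2]. *)
Definition vec2 := (R * R)%type.

Record mat22 := Mat22 { a11 : R; a12 : R; a21 : R; a22 : R }.
Record mat12 := Mat12 { b1 : R; b2 : R }.

Definition mulv (A : mat22) (x : vec2) : vec2 :=
  (a11 A * fst x + a12 A * snd x, a21 A * fst x + a22 A * snd x).

Definition mulB (B : mat12) (x : vec2) : R := b1 B * fst x + b2 B * snd x.

Definition powv (A : mat22) (k : nat) (x : vec2) : vec2 := Nat.iter k (mulv A) x.

Definition vscale (c : R) (x : vec2) : vec2 := (c * fst x, c * snd x).
Definition vadd (x y : vec2) : vec2 := (fst x + fst y, snd x + snd y).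
Definition vdist (x y : vec2) : R :=
  sqrt ((fst x - fst y) ^ 2 + (snd x - snd y) ^ 2).

Definition NT (A : mat22) (B : mat12) (x : vec2) : Prop :=
  forall k : nat, 0 < mulB B (powv A k x).

Definition is_convex (S : vec2 -> Prop) : Prop :=
  forall x y t, 0 <= t <= 1 -> S x -> S y -> S (vadd (vscale t x) (vscale (1 - t) y)).

Definition has_nonempty_interior (S : vec2 -> Prop) : Prop :=
  exists x eps, 0 < eps /\ forall y, vdist y x < eps -> S y.

Definition is_ray (S : vec2 -> Prop) : Prop :=
  exists v : vec2, v <> (0, 0) /\ forall x, S x <-> exists k, 0 < k /\ x = vscale k v.

From Stdlib Require Import Reals Lra Classical.
Open Scope R_scope.

(* Since x |-> B A^k x is linear for every k, the set NT is
   closed under nonnegative combinations with a nonzero coefficient: it is a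
   convex cone not containing the origin.  Assuming NT is nonempty, there are
   two cases, according to the determinant det2 of pairs of its points.
   - If two points x, y of NT have det2 x y > 0, they span R^2, and every w
     near x + y has positive coordinates in the basis (x, y) (Cramer's rule
     plus a perturbation bound on det2), so NT has nonempty interior.
   - Otherwise all points of NT are collinear with a fixed point x0 <> 0 of
     NT; writing y = c x0 and evaluating B at k = 0 gives c > 0, so NT is the
     open ray spanned by x0. *)

Lemma powv_lin A k s t x y :
  powv A k (vadd (vscale s x) (vscale t y)) =
  vadd (vscale s (powv A k x)) (vscale t (powv A k y)).
Proof.
  induction k as [|k IH]; [reflexivity|].
  unfold powv in *; simpl; rewrite IH.
  destruct (Nat.iter k (mulv A) x) as [p q], (Nat.iter k (mulv A) y) as [u w].
  unfold mulv, vadd, vscale; simpl; f_equal; ring.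
Qed.

Lemma mulB_lin B s t x y :
  mulB B (vadd (vscale s x) (vscale t y)) = s * mulB B x + t * mulB B y.
Proof. unfold mulB, vadd, vscale; simpl; ring. Qed.

Lemma NT_comb A B s t x y : 0 <= s -> 0 <= t -> 0 < s + t ->
  NT A B x -> NT A B y -> NT A B (vadd (vscale s x) (vscale t y)).
Proof.
  intros Hs Ht Hst Hx Hy k; rewrite powv_lin, mulB_lin.
  specialize (Hx k); specialize (Hy k).
  pose proof (Rmult_le_pos _ _ Hs (Rlt_le _ _ Hx)).
  pose proof (Rmult_le_pos _ _ Ht (Rlt_le _ _ Hy)).
  destruct (Rlt_or_le 0 s) as [Hs'|Hs']; [pose proof (Rmult_lt_0_compat _ _ Hs' Hx)
                                         | pose proof (Rmult_lt_0_compat t _ ltac:(lra) Hy)];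
  lra.
Qed.

Lemma NT_scale A B k x : 0 < k -> NT A B x -> NT A B (vscale k x).
Proof.
  intros Hk Hx.
  replace (vscale k x) with (vadd (vscale k x) (vscale 0 x))
    by (destruct x; unfold vadd, vscale; simpl; f_equal; ring).
  apply NT_comb; auto; lra.
Qed.

Lemma NT_not0 A B : ~ NT A B (0, 0).
Proof. intro H; specialize (H O); unfold mulB, powv in H; simpl in H; lra. Qed.

Definition det2 (x y : vec2) : R := fst x * snd y - snd x * fst y.

Lemma det2_swap x y : det2 y x = - det2 x y.
Proof. unfold det2; ring. Qed.

Lemma cramer x y w : det2 x y <> 0 ->
  w = vadd (vscale (det2 w y / det2 x y) x) (vscale (det2 x w / det2 x y) y).
Proof.
  destruct x as [x1 x2], y as [y1 y2], w as [w1 w2]; unfold det2, vadd, vscale;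
    simpl; intro Hd; f_equal; field; exact Hd.
Qed.

Lemma abs_le_norm a b : Rabs a <= sqrt (a ^ 2 + b ^ 2).
Proof. rewrite <- sqrt_Rsqr_abs; apply sqrt_le_1_alt; unfold Rsqr; nra. Qed.

Lemma Rabs_le_between a b : Rabs a <= b -> - b <= a <= b.
Proof. unfold Rabs; destruct (Rcase_abs a); lra. Qed.

Lemma det2_perturb w z y r : vdist w z < r ->
  Rabs (det2 w y - det2 z y) <= r * (Rabs (fst y) + Rabs (snd y)).
Proof.
  destruct w as [w1 w2], z as [z1 z2], y as [y1 y2]; unfold vdist, det2; simpl.
  intro Hw.
  pose proof (abs_le_norm (w1 - z1) (w2 - z2)) as H1.
  pose proof (abs_le_norm (w2 - z2) (w1 - z1)) as H2.
  rewrite Rplus_comm in H2.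
  replace (w1 * y2 - w2 * y1 - (z1 * y2 - z2 * y1))
    with ((w1 - z1) * y2 + - ((w2 - z2) * y1)) by ring.
  eapply Rle_trans; [apply Rabs_triang|].
  rewrite Rabs_Ropp, !Rabs_mult.
  pose proof (Rmult_le_compat_r _ _ _ (Rabs_pos y2) (Rlt_le _ _ (Rle_lt_trans _ _ _ H1 Hw))).
  pose proof (Rmult_le_compat_r _ _ _ (Rabs_pos y1) (Rlt_le _ _ (Rle_lt_trans _ _ _ H2 Hw))).
  lra.
Qed.

(* A cone in the plane containing two independent vectors x, y has nonempty
   interior: a ball around x + y lies in the open cone they span. *)
Lemma cone_interior (S : vec2 -> Prop) x y :
  (forall s t u v, 0 < s -> 0 < t -> S u -> S v ->
     S (vadd (vscale s u) (vscale t v))) ->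
  S x -> S y -> 0 < det2 x y -> has_nonempty_interior S.
Proof.
  intros Hcomb Hx Hy Hd.
  set (d := det2 x y) in *.
  set (Nx := Rabs (fst x) + Rabs (snd x)); set (Ny := Rabs (fst y) + Rabs (snd y)).
  assert (HNx : 0 <= Nx) by (unfold Nx; pose proof (Rabs_pos (fst x));
                              pose proof (Rabs_pos (snd x)); lra).
  assert (HNy : 0 <= Ny) by (unfold Ny; pose proof (Rabs_pos (fst y));
                              pose proof (Rabs_pos (snd y)); lra).
  set (eps := d / (1 + Nx + Ny)).
  assert (Heps : eps * (1 + Nx + Ny) = d) by (unfold eps; field; lra).
  assert (Heps_pos : 0 < eps) by (unfold eps; apply Rdiv_lt_0_compat; lra).
  exists (vadd x y), eps; split; [exact Heps_pos|].
  intros w Hw.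
  assert (Hzy : det2 (vadd x y) y = d)
    by (unfold d, det2, vadd; simpl; ring).
  assert (Hzx : det2 (vadd x y) x = - d)
    by (unfold d, det2, vadd; simpl; ring).
  pose proof (det2_perturb w (vadd x y) y eps Hw) as Py.
  pose proof (det2_perturb w (vadd x y) x eps Hw) as Px.
  fold Nx Ny in Px, Py; rewrite Hzy in Py; rewrite Hzx in Px.
  apply Rabs_le_between in Px; apply Rabs_le_between in Py.
  pose proof (Rmult_le_pos _ _ (Rlt_le _ _ Heps_pos) HNx).
  pose proof (Rmult_le_pos _ _ (Rlt_le _ _ Heps_pos) HNy).
  rewrite (cramer x y w (Rgt_not_eq _ _ Hd)); fold d.
  rewrite (det2_swap x w) in Px.
  apply Hcomb; auto; apply Rdiv_lt_0_compat; lra.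
Qed.

Lemma collinear_multiple x y : x <> (0, 0) -> det2 x y = 0 ->
  exists c, y = vscale c x.
Proof.
  destruct x as [x1 x2], y as [y1 y2]; unfold det2, vscale; simpl; intros Hx Hd.
  destruct (Req_dec x1 0) as [H1|H1].
  - assert (H2 : x2 <> 0) by (intro; subst; apply Hx; reflexivity).
    exists (y2 / x2); f_equal; [|field; exact H2].
    subst x1; apply (Rmult_eq_reg_l x2); [field_simplify; lra | exact H2].
  - exists (y1 / x1); f_equal; [field; exact H1|].
    apply (Rmult_eq_reg_l x1); [field_simplify; lra | exact H1].
Qed.

Lemma NT_ray A B x0 : NT A B x0 ->
  (forall y, NT A B y -> det2 x0 y = 0) -> is_ray (NT A B).
Proof.
  intros Hx0 Hcol.
  assert (Hnz : x0 <> (0, 0)) by (intro E; subst; exact (NT_not0 A B Hx0)).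
  exists x0; split; [exact Hnz|]; intro y; split.
  - intro Hy; destruct (collinear_multiple x0 y Hnz (Hcol y Hy)) as [c ->].
    exists c; split; [|reflexivity].
    pose proof (Hx0 O) as P0; pose proof (Hy O) as P1.
    replace (mulB B (powv A 0 (vscale c x0))) with (c * mulB B (powv A 0 x0)) in P1
      by (unfold mulB, vscale; simpl; ring).
    nra.
  - intros [k [Hk ->]]; exact (NT_scale A B k x0 Hk Hx0).
Qed.

Theorem proposition2 (A : mat22) (B : mat12) :
  (forall x, ~ NT A B x)
  \/ is_ray (NT A B)
  \/ (is_convex (NT A B) /\ has_nonempty_interior (NT A B)
      /\ forall k x, 0 < k -> NT A B x -> NT A B (vscale k x)).
Proof.
  destruct (classic (exists x, NT A B x)) as [[x0 Hx0]|Hempty].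
  2: { left; intros x Hx; apply Hempty; eauto. }
  right.
  destruct (classic (exists x y, NT A B x /\ NT A B y /\ det2 x y <> 0))
    as [[x [y [Hx [Hy Hd]]]]|Hcol].
  - right; split; [|split].
    + intros u v t Ht Hu Hv; apply NT_comb; auto; lra.
    + assert (Hcomb : forall s t u v, 0 < s -> 0 < t -> NT A B u -> NT A B v ->
                 NT A B (vadd (vscale s u) (vscale t v)))
        by (intros; apply NT_comb; auto; lra).
      destruct (Rlt_or_le 0 (det2 x y)) as [Hpos|Hneg].
      * exact (cone_interior _ x y Hcomb Hx Hy Hpos).
      * apply (cone_interior _ y x Hcomb Hy Hx); rewrite det2_swap; lra.
    + intros k u; apply NT_scale.
  - left; apply (NT_ray A B x0 Hx0).
    intros y Hy; apply NNPP; intro Hd; apply Hcol; eauto.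
Qed.
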